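(* Consider an open quantum system on a finite-dimensional Hilbert space $\mathcal H$ with Hamiltonian $H$ and a single coupling operator $L$, and let $V$ be a Lyapunov operator of the system (commuting with $H$). If $cV\le\mathfrak D(V)$ for some constant $c>0$, then for every initial density state the state trajectory $\rho_t$ converges to $Z_V$, i.e. every limit point of $\rho_t$ as $t\to\infty$ lies in $Z_V$.
   Context: The density state (positive semidefinite, trace one) evolves by $\dot\rho_t=-i[H,\rho_t]+L\rho_tL^\dagger-\tfrac12L^\dagger L\rho_t-\tfrac12\rho_tL^\dagger L$; for an observable $X$ commuting with $H$ the generator is $\mathcal G(X)=L^\dagger XL-\tfrac12L^\dagger LX-\tfrac12XL^\dagger L$ and $\frac{d}{dt}\operatorname{tr}(X\rho_t)=\operatorname{tr}(\mathcal G(X)\rho_t)$. Standing assumption: the observables considered commute with $H$. A Lyapunov operator is a self-adjoint $V\ge0$ whose smallest eigenvalue is $0$ and with $\mathcal G(V)\le0$. The dissipation functional is $\mathfrak D(X)=\mathcal G(X^\dagger X)-\mathcal G(X^\dagger)X-X^\dagger\mathcal G(X)=[L^\dagger,X^\dagger][X,L]$. $Z_V=\{\rho \text{ density state}:\operatorname{tr}(V\rho)=0\}$; convergence of states means convergence of $\operatorname{tr}(\rho Y)$ for all operators $Y$. *)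

From HB Require Import structures.
From mathcomp Require Import all_boot all_order all_algebra.
From mathcomp Require Import all_classical all_reals all_analysis.
From mathcomp.real_closed Require Import complex.
Set Implicit Arguments. Unset Strict Implicit. Unset Printing Implicit Defensive.
Import Order.TTheory GRing.Theory Num.Theory.
Import numFieldNormedType.Exports.
Local Open Scope classical_set_scope.
Local Open Scope ring_scope.

Section Lindblad.
Variable R : realType.
Local Notation C := R[i].
Variable n : nat.
Local Notation M := 'M[C]_n.

Definition mxadj (A : M) : M := \matrix_(i, j) (A j i)^*%C.

Definition selfadj (A : M) : Prop := mxadj A = A.

Definition psd (A : M) : Prop :=
  selfadj A /\ forall v : 'cV[C]_n, 0 <= ((\matrix_(i, j) (v j i)^*%C) *m A *m v) 0 0.

Definition mxle (A B : M) : Prop := psd (B - A).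

Definition density (rho : M) : Prop := psd rho /\ \tr rho = 1.

(* Lindblad generator (Heisenberg picture, for observables commuting with H) *)
Definition gen (L X : M) : M :=
  mxadj L *m X *m L - 2^-1 *: (mxadj L *m L *m X) - 2^-1 *: (X *m mxadj L *m L).

Definition lindblad (H L rho : M) : M :=
  - 'i *: (H *m rho - rho *m H) + L *m rho *m mxadj L
  - 2^-1 *: (mxadj L *m L *m rho) - 2^-1 *: (rho *m mxadj L *m L).

Definition dissip (L X : M) : M :=
  gen L (mxadj X *m X) - gen L (mxadj X) *m X - mxadj X *m gen L X.

Definition lyapunov (L V : M) : Prop :=
  selfadj V /\ psd V /\ eigenvalue V 0 /\ mxle (gen L V) 0.

Definition ZV (V : M) : set M := [set rho | density rho /\ \tr (V *m rho) = 0].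

Definition trajectory (H L : M) (rho : R -> M) : Prop :=
  (forall t : R, 0 <= t -> density (rho t)) /\
  (forall i j, (fun t => complex.Re (rho t i j)) @ (0:R)^'+ --> complex.Re (rho 0 i j) /\
               (fun t => complex.Im (rho t i j)) @ (0:R)^'+ --> complex.Im (rho 0 i j)) /\
  (forall t : R, 0 < t -> forall i j,
     is_derive t (1 : R) (fun s => complex.Re (rho s i j)) (complex.Re (lindblad H L (rho t) i j)) /\
     is_derive t (1 : R) (fun s => complex.Im (rho s i j)) (complex.Im (lindblad H L (rho t) i j))).

(* sigma is a limit point of rho_t as t -> oo, convergence of states meaning
   convergence of tr(rho Y) for every operator Y (in C, i.e. of its real and
   imaginary parts) *)
Definition traj_limit_point (rho : R -> M) (sigma : M) : Prop :=
  exists s : nat -> R, s @ \oo --> +oo /\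
    forall Y : M,
      (fun k => complex.Re (\tr (rho (s k) *m Y))) @ \oo --> complex.Re (\tr (sigma *m Y)) /\
      (fun k => complex.Im (\tr (rho (s k) *m Y))) @ \oo --> complex.Im (\tr (sigma *m Y)).

End Lindblad.

From HB Require Import structures.
From mathcomp Require Import all_boot all_order all_algebra.
From mathcomp Require Import all_classical all_reals all_analysis.
From mathcomp.real_closed Require Import complex.
From mathcomp Require Import ring lra.
Import Order.TTheory GRing.Theory Num.Theory.
Import numFieldNormedType.Exports.
Local Open Scope classical_set_scope.
Local Open Scope ring_scope.

(* Write g(t) = tr(V rho_t) >= 0.  Since G(V) <= 0, g is nonincreasing.  For
   a large enough K > 0 the observable W = V^2 - K V satisfies
   G(W) = D(V) - G(V) V - V G(V) - K G(V) >= (c/2) V: with N = -G(V) >= 0,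
   expanding (K - V) N (K - V) >= 0 gives -N V - V N + K N >= -V N V / K, and
   V N V <= |N| V^2 <= |N| |V| V.  Hence phi(t) = tr(W rho_t) grows at rate at
   least (c/2) g(t) >= (c/2) g(T) on [1, T], while phi <= tr(V^2 rho) <= |V| g
   stays bounded; so g(T) = O(1/T) tends to 0.  A limit point sigma is a
   density state (the defining inequalities are closed) with tr(V sigma) = 0. *)

Section Operators.
Context {R : realType} {n : nat}.
Local Notation C := R[i].
Local Notation M := 'M[C]_n.

Lemma mxadjE (A : M) i j : mxadj A i j = (A j i)^*.
Proof. by rewrite mxE. Qed.

Lemma mxadj_trmxC (A : M) : mxadj A = map_mx Num.conj A^T.
Proof. by apply/matrixP => i j; rewrite !mxE. Qed.

Lemma mxadjK (A : M) : mxadj (mxadj A) = A.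
Proof. by apply/matrixP => i j; rewrite !mxadjE conjCK. Qed.

Lemma mxadjD (A B : M) : mxadj (A + B) = mxadj A + mxadj B.
Proof. by apply/matrixP => i j; rewrite !mxE rmorphD. Qed.

Lemma mxadjN (A : M) : mxadj (- A) = - mxadj A.
Proof. by apply/matrixP => i j; rewrite !mxE rmorphN. Qed.

Lemma mxadjB (A B : M) : mxadj (A - B) = mxadj A - mxadj B.
Proof. by rewrite mxadjD mxadjN. Qed.

Lemma mxadj_scalar a : mxadj (a%:M : M) = a^*%:M.
Proof. by apply/matrixP => i j; rewrite !mxE eq_sym rmorphMn. Qed.

Lemma selfadj_scalarB (a : C) (V : M) :
  0 <= a -> selfadj V -> selfadj (a%:M - V).
Proof. by move=> a0 sa; rewrite /selfadj mxadjB mxadj_scalar sa geC0_conj. Qed.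

Definition vadj (v : 'cV[C]_n) : 'rV[C]_n := \matrix_(i, j) (v j i)^*%C.

Definition qform (X : M) (v : 'cV[C]_n) : C := (vadj v *m X *m v) 0 0.

Definition nonneg_form (X : M) : Prop := forall v, 0 <= qform X v.

Lemma psd_nonneg_form {X : M} : psd X -> nonneg_form X.
Proof. by case. Qed.

Lemma vadj_mul (A : M) v : vadj (A *m v) = vadj v *m mxadj A.
Proof.
apply/matrixP => i j; rewrite !mxE rmorph_sum; apply: eq_bigr => k _.
by rewrite !mxE rmorphM mulrC.
Qed.

Lemma qformD A B v : qform (A + B) v = qform A v + qform B v.
Proof. by rewrite /qform mulmxDr mulmxDl mxE. Qed.

Lemma qformN A v : qform (- A) v = - qform A v.
Proof. by rewrite /qform mulmxN mulNmx mxE. Qed.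

Lemma qformB A B v : qform (A - B) v = qform A v - qform B v.
Proof. by rewrite qformD qformN. Qed.

Lemma qformZ a A v : qform (a *: A) v = a * qform A v.
Proof. by rewrite /qform -scalemxAr -scalemxAl mxE. Qed.

Lemma qform_conjugate (B N : M) v : qform (mxadj B *m N *m B) v = qform N (B *m v).
Proof. by rewrite /qform vadj_mul !mulmxA. Qed.

Lemma qform_sq (V : M) v : selfadj V -> qform (V *m V) v = qform 1%:M (V *m v).
Proof. by move=> sa; rewrite -qform_conjugate sa mulmx1. Qed.

Lemma qform_mxtrace (A : M) v : qform A v = \tr (A *m (v *m vadj v)).
Proof.
have -> : qform A v = \tr (vadj v *m A *m v) by rewrite /mxtrace big_ord1.
by rewrite mxtrace_mulC !mulmxA mxtrace_mulC !mulmxA.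
Qed.

Lemma mxtrace_mul_delta (A : M) i j : \tr (A *m delta_mx j i) = A i j.
Proof.
rewrite /mxtrace (bigD1 i) //= big1 ?addr0.
  rewrite mxE (bigD1 j) //= big1 ?addr0; first by rewrite mxE !eqxx mulr1.
  by move=> k kj; rewrite mxE (negbTE kj) mulr0.
move=> k ki; rewrite mxE big1 // => l _.
by rewrite mxE (negbTE ki) andbF mulr0.
Qed.

Lemma qform_basis (P Y : M) i :
  qform Y (mxadj P *m delta_mx i 0) = (P *m Y *m mxadj P) i i.
Proof.
rewrite /qform vadj_mul mxadjK.
have -> : vadj (delta_mx i 0 : 'cV[C]_n) = delta_mx 0 i.
  by apply/matrixP => a b; rewrite !mxE conjc_nat andbC.
by rewrite -!mulmxA -rowE !mulmxA -colE !mxE.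
Qed.

(* Spectral decomposition rho = sum_i d_i u_i u_i^*, with d_i = u_i^* rho u_i. *)
Lemma selfadj_mxtrace_decomp {rho : M} : selfadj rho ->
  exists u : 'I_n -> 'cV[C]_n,
    forall X : M, \tr (X *m rho) = \sum_i qform X (u i) * qform rho (u i).
Proof.
move=> sa.
have /orthomx_spectralP rhoE : rho \is normalmx.
  by rewrite qualifE -mxadj_trmxC sa.
set P := spectralmx rho in rhoE; set d := spectral_diag rho in rhoE.
have Pu : P \is unitarymx := spectral_unitarymx rho.
have PPadj : P *m mxadj P = 1%:M by rewrite mxadj_trmxC; exact/unitarymxP.
have invP : invmx P = mxadj P by rewrite mxadj_trmxC invmx_unitary.
exists (fun i => mxadj P *m delta_mx i 0) => X.
have dE i : qform rho (mxadj P *m delta_mx i 0) = d 0 i.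
  rewrite qform_basis rhoE invP !mulmxA PPadj mul1mx -mulmxA PPadj mulmx1.
  by rewrite mxE eqxx mulr1n.
under eq_bigr => i _ do rewrite qform_basis dE.
rewrite rhoE invP !mulmxA mxtrace_mulC !mulmxA mul_mx_diag /mxtrace.
by apply: eq_bigr => i _; rewrite mxE.
Qed.

Lemma psd_mxtrace_ge0 {rho X : M} : psd rho -> nonneg_form X -> 0 <= \tr (X *m rho).
Proof.
move=> [sa rho_ge0] X_ge0; have [u ->] := selfadj_mxtrace_decomp sa.
by apply: sumr_ge0 => i _; apply: mulr_ge0; [apply: X_ge0 | apply: rho_ge0].
Qed.

Lemma qform1E (w : 'cV[C]_n) : qform 1%:M w = \sum_k `|w k 0| ^+ 2.
Proof. by rewrite /qform mulmx1 mxE; apply: eq_bigr => k _; rewrite mxE normCKC. Qed.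

Lemma qformE (X : M) (w : 'cV[C]_n) :
  qform X w = \sum_j \sum_k (w k 0)^* * X k j * w j 0.
Proof.
rewrite /qform mxE; apply: eq_bigr => j _; rewrite mxE big_distrl /=.
by apply: eq_bigr => k _; rewrite mxE.
Qed.

Lemma norm_mul_le_qform1 (w : 'cV[C]_n) k j :
  `|w k 0| * `|w j 0| <= 2 * qform 1%:M w.
Proof.
have sq_le i : `|w i 0| ^+ 2 <= qform 1%:M w.
  rewrite qform1E (bigD1 i) //= lerDl.
  by apply: sumr_ge0 => l _; apply: exprn_ge0.
have amgm := real_leif_mean_square_scaled (normr_real (w k 0)) (normr_real (w j 0)).
apply: le_trans (_ : `|w k 0| * `|w j 0| *+ 2 <= _).
  by rewrite mulr2n lerDl mulr_ge0.
by apply: le_trans amgm.1 _; rewrite mulr2n mulrDl mul1r lerD.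
Qed.

Lemma qform_bounded (X : M) :
  exists2 b : C, 0 < b & forall w, `|qform X w| <= b * qform 1%:M w.
Proof.
set S := \sum_j \sum_k `|X k j|.
have S0 : 0 <= S by apply: sumr_ge0 => j _; apply: sumr_ge0.
exists (2 * S + 1); first by apply: ltr_wpDl; rewrite ?mulr_ge0.
move=> w; have w_ge0 : 0 <= qform 1%:M w by rewrite qform1E sumr_ge0.
apply: le_trans (_ : 2 * S * qform 1%:M w <= _); last first.
  by apply: ler_wpM2r => //; rewrite lerDl.
rewrite qformE (mulrC 2) -mulrA /S !big_distrl /=.
apply: le_trans (ler_norm_sum _ _ _) _; apply: ler_sum => j _.
rewrite big_distrl /=; apply: le_trans (ler_norm_sum _ _ _) _.
apply: ler_sum => k _; rewrite !normrM norm_conjC mulrAC mulrC.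
by apply: ler_wpM2l => //; apply: norm_mul_le_qform1.
Qed.

Lemma nonneg_form_bounded {X : M} : nonneg_form X ->
  exists2 b : C, 0 < b & forall w, qform X w <= b * qform 1%:M w.
Proof.
move=> X_ge0; have [b b0 Xb] := qform_bounded X.
by exists b => // w; rewrite -(ger0_norm (X_ge0 w)).
Qed.

Lemma scalarB_conjugateE (a : C) (V N : M) :
  (a%:M - V) *m N *m (a%:M - V) =
  (a * a) *: N - a *: (N *m V) - a *: (V *m N) + V *m N *m V.
Proof.
rewrite mulmxBl mul_scalar_mx mulmxBr mul_mx_scalar mulmxBl -scalemxAl.
rewrite scalerBr scalerA opprB.
move: ((a * a) *: N) (a *: (V *m N)) (a *: (N *m V)) (V *m N *m V) => x y z w.
by rewrite addrA addrAC (addrAC x (- z)).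
Qed.

(* For V <= b: 0 <= (b - V) V (b - V) = b^2 V - 2b V^2 + V^3 <= b^2 V - b V^2. *)
Lemma qform_sq_le {V : M} : selfadj V -> nonneg_form V ->
  exists2 b : C, 0 < b & forall v, qform (V *m V) v <= b * qform V v.
Proof.
move=> sa V_ge0; have [b b0 Vb] := nonneg_form_bounded V_ge0.
exists b => [//|v].
have V3_le : qform (V *m V *m V) v <= b * qform (V *m V) v.
  by rewrite -{1}sa qform_conjugate qform_sq.
have bVsa : selfadj (b%:M - V) by apply: selfadj_scalarB => //; apply: ltW.
have := V_ge0 ((b%:M - V) *m v).
rewrite -qform_conjugate bVsa scalarB_conjugateE qformD !qformB !qformZ.
set a := qform V v; set a2 := qform (V *m V) v; rewrite -/a2 in V3_le => ge0.
rewrite -(ler_pM2l b0) mulrA -subr_ge0; apply: le_trans ge0 _.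
by rewrite -addrA gerDl addrC subr_le0.
Qed.

End Operators.

Section Generator.
Context {R : realType} {n : nat}.
Local Notation C := R[i].
Local Notation M := 'M[C]_n.
Implicit Types (H L A B X V rho : M).

Lemma genD L A B : gen L (A + B) = gen L A + gen L B.
Proof.
have sumACA (a b c d e f : M) : a + b - (c + d) - (e + f) = a - c - e + (b - d - f).
  by rewrite !opprD (addrACA a b (- c) (- d)) (addrACA (a - c) (b - d) (- e) (- f)).
by rewrite /gen mulmxDr mulmxDl !mulmxDl !mulmxDr !scalerDr sumACA.
Qed.

Lemma genZ L k A : gen L (k *: A) = k *: gen L A.
Proof. by rewrite /gen -!scalemxAr -!scalemxAl !scalerBr !scalerA (mulrC k). Qed.

Lemma genB L A B : gen L (A - B) = gen L A - gen L B.
Proof. by rewrite -scaleN1r genD genZ scaleN1r. Qed.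

Lemma gen_sq L V : selfadj V ->
  gen L (V *m V) = dissip L V + gen L V *m V + V *m gen L V.
Proof. by move=> sa; rewrite /dissip sa addrAC !subrK. Qed.

Lemma comm_sq_subZ H V (K : C) :
  V *m H = H *m V -> (V *m V - K *: V) *m H = H *m (V *m V - K *: V).
Proof.
move=> VH; rewrite mulmxBl mulmxBr -scalemxAl -scalemxAr VH.
by rewrite -mulmxA VH !mulmxA VH.
Qed.

Lemma mxtrace_lindblad H L X rho : X *m H = H *m X ->
  \tr (X *m lindblad H L rho) = \tr (gen L X *m rho).
Proof.
move=> XH.
have trXE (k1 k2 : C) (Y1 Y2 Y3 Y4 : M) :
    \tr (X *m (k1 *: Y1 + Y2 - k2 *: Y3 - k2 *: Y4)) =
    k1 * \tr (X *m Y1) + \tr (X *m Y2) - k2 * \tr (X *m Y3) - k2 * \tr (X *m Y4).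
  by rewrite !mulmxBr mulmxDr !raddfB /= mxtraceD -!scalemxAr !mxtraceZ.
have trE (k : C) (Y1 Y2 Y3 : M) : \tr ((Y1 - k *: Y2 - k *: Y3) *m rho) =
    \tr (Y1 *m rho) - k * \tr (Y2 *m rho) - k * \tr (Y3 *m rho).
  by rewrite !mulmxBl !raddfB /= -!scalemxAl !mxtraceZ.
rewrite /lindblad /gen trXE trE mulmxBr raddfB /=.
have -> : \tr (X *m (H *m rho)) = \tr (X *m (rho *m H)).
  by rewrite mulmxA XH -mulmxA mxtrace_mulC mulmxA.
have -> : \tr (X *m (L *m rho *m mxadj L)) = \tr (mxadj L *m X *m L *m rho).
  by rewrite mulmxA mxtrace_mulC !mulmxA.
have -> : \tr (X *m (rho *m mxadj L *m L)) = \tr (mxadj L *m L *m X *m rho).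
  by rewrite !mulmxA -(mulmxA (X *m rho)) mxtrace_mulC !mulmxA.
by rewrite subrr mulr0 add0r !mulmxA addrAC.
Qed.

Lemma mxle0_nonneg_form {A} : mxle A 0 -> nonneg_form (- A).
Proof. by move/psd_nonneg_form; rewrite sub0r. Qed.

Lemma mxle_nonneg_form {A B} : mxle A B -> nonneg_form (B - A).
Proof. exact: psd_nonneg_form. Qed.

(* With N = -G(V) >= 0 and K = 2 |N| |V| / c, the expansion of
   (K - V) N (K - V) >= 0 absorbs the cross terms -N V - V N of G(V^2). *)
Lemma gen_sq_sub_ge {L V : M} {c : R} : selfadj V -> nonneg_form V ->
  mxle (gen L V) 0 -> 0 < c -> mxle (c%:C%C *: V) (dissip L V) ->
  exists2 K : C, 0 < K &
    nonneg_form (gen L (V *m V - K *: V) - (c / 2)%:C%C *: V).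
Proof.
move=> sa V_ge0 /mxle0_nonneg_form N_ge0 c0 /mxle_nonneg_form D_ge0.
set N := - gen L V in N_ge0; have genVE : gen L V = - N by rewrite opprK.
have [bN bN0 Nb] := nonneg_form_bounded N_ge0.
have [bV bV0 Vb] := qform_sq_le sa V_ge0.
set h : C := (c / 2)%:C%C.
have h0 : 0 < h by rewrite ltcR divr_gt0.
have ch : c%:C%C = h + h by rewrite -rmorphD -splitr.
set K := bN * bV / h.
have K0 : 0 < K by rewrite divr_gt0 ?mulr_gt0.
have KE : K * h = bN * bV by rewrite divfK ?gt_eqF.
clearbody h K.
exists K => [//|v].
have KVsa : selfadj (K%:M - V) by apply: selfadj_scalarB => //; apply: ltW.
have KVN_ge0 := N_ge0 ((K%:M - V) *m v).
rewrite -qform_conjugate KVsa scalarB_conjugateE in KVN_ge0.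
rewrite qformD !qformB !qformZ in KVN_ge0.
have Dc_ge0 := D_ge0 v; rewrite qformB qformZ ch in Dc_ge0.
have VNV_le : qform (V *m N *m V) v <= K * h * qform V v.
  rewrite KE -{1}sa qform_conjugate -mulrA; apply: le_trans (Nb _) _.
  by rewrite -qform_sq //; apply: ler_wpM2l; [exact: ltW | exact: Vb].
rewrite qformB qformZ genB genZ gen_sq // genVE mulNmx mulmxN.
move: Dc_ge0; move: (dissip L V) => D Dc_ge0.
rewrite qformB !qformD !qformN qformZ qformN -(pmulr_rge0 _ K0).
(* Generalizing the scalars keeps [ring] away from the matrix expressions. *)
move: KVN_ge0 Dc_ge0 VNV_le.
move: (qform V v) (qform N v) (qform (N *m V) v) (qform (V *m N) v).
move: (qform (V *m N *m V) v) (qform D v) => w d a nn nV vN.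
move=> KVN_ge0 Dc_ge0 VNV_le.
have -> : K * (d - nV - vN - K * - nn - h * a) =
    K * (d - (h + h) * a) + (K * K * nn - K * nV - K * vN + w) + (K * h * a - w).
  by ring.
apply: addr_ge0; last by rewrite subr_ge0.
by apply: addr_ge0 => //; apply: mulr_ge0 Dc_ge0; apply: ltW.
Qed.

End Generator.

Section RealPart.
Context {R : realType}.
Local Notation C := R[i].
Implicit Types x y : C.

Lemma ReM x y : complex.Re (x * y) = complex.Re x * complex.Re y - complex.Im x * complex.Im y.
Proof. by case: x => a b; case: y. Qed.

Lemma ReM_ge0l x y : 0 <= x -> complex.Re (x * y) = complex.Re x * complex.Re y.
Proof. by move=> /ger0_Im x0; rewrite ReM x0 mul0r subr0. Qed.

Lemma Re_ge0 x : 0 <= x -> 0 <= complex.Re x.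
Proof. by rewrite lecE => /andP[]. Qed.

Lemma Re_conj x : complex.Re x^* = complex.Re x.
Proof. by case: x. Qed.

Lemma Im_conj x : complex.Im x^* = - complex.Im x.
Proof. by case: x. Qed.

Lemma complexP x y : complex.Re x = complex.Re y -> complex.Im x = complex.Im y -> x = y.
Proof. by case: x => a b; case: y => a' b' /= -> ->. Qed.

End RealPart.

Section Trajectory.
Context {R : realType} {n : nat}.
Local Notation C := R[i].
Local Notation M := 'M[C]_n.

Lemma Re_mxtrace_le {rho A B : M} : psd rho -> nonneg_form (B - A) ->
  complex.Re (\tr (A *m rho)) <= complex.Re (\tr (B *m rho)).
Proof.
move=> rho_psd /(psd_mxtrace_ge0 rho_psd) /Re_ge0.
by rewrite mulmxBl !raddfB /= subr_ge0.
Qed.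

Lemma Re_mxtrace_mulE (X A : M) : complex.Re (\tr (X *m A)) =
  \sum_i \sum_j (complex.Re (X i j) * complex.Re (A j i)
                 - complex.Im (X i j) * complex.Im (A j i)).
Proof.
rewrite raddf_sum; apply: eq_bigr => i _.
by rewrite mxE raddf_sum; apply: eq_bigr => j _; rewrite /= ReM.
Qed.

Lemma trajectory_is_derive (H L X : M) (rho : R -> M) (t : R) :
  trajectory H L rho -> 0 < t ->
  is_derive t 1 (fun s => complex.Re (\tr (X *m rho s)))
    (complex.Re (\tr (X *m lindblad H L (rho t)))).
Proof.
move=> [_ [_ rho_deriv]] t0.
have -> : (fun s => complex.Re (\tr (X *m rho s))) =
    \sum_i \sum_j (complex.Re (X i j) \*: (fun s => complex.Re (rho s j i)) -
                   complex.Im (X i j) \*: (fun s => complex.Im (rho s j i))).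
  apply/funext => s; rewrite Re_mxtrace_mulE fct_sumE; apply: eq_bigr => i _.
  by rewrite fct_sumE.
rewrite Re_mxtrace_mulE; apply: is_derive_sum => i; apply: is_derive_sum => j.
have [dRe dIm] := rho_deriv t t0 j i.
exact: is_deriveB.
Qed.

End Trajectory.

Section Decay.
Context {R : realType}.

Lemma MVT_gt0 {f df : R -> R} {x y : R} : 0 < x -> x <= y ->
  (forall t : R, 0 < t -> is_derive t 1 f (df t)) ->
  exists2 z, x <= z <= y & f y - f x = df z * (y - x).
Proof.
move=> x0 xy f_deriv.
have f_deriv' z : z \in `]x, y[ -> is_derive z 1 f (df z).
  by rewrite in_itv /= => /andP[xz _]; apply: f_deriv; apply: lt_trans xz.
have f_cont : {within `[x, y], continuous f}.
  apply: derivable_within_continuous => z; rewrite in_itv /= => /andP[xz _].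
  by apply: ex_derive; apply: f_deriv; apply: lt_le_trans xz.
by have [z] := MVT_segment xy f_deriv' f_cont; rewrite in_itv /=; exists z.
Qed.

Variables (g dg phi dphi : R -> R) (a B : R).
Hypotheses (a_gt0 : 0 < a) (B_ge0 : 0 <= B).
Hypothesis g_deriv : forall t : R, 0 < t -> is_derive t 1 g (dg t).
Hypothesis dg_le0 : forall t : R, 0 < t -> dg t <= 0.
Hypothesis phi_deriv : forall t : R, 0 < t -> is_derive t 1 phi (dphi t).
Hypothesis dphi_ge : forall t : R, 0 < t -> a * g t <= dphi t.
Hypothesis phi_le : forall t : R, 1 <= t -> phi t <= B * g t.

(* phi' >= a g with g nonincreasing gives phi T - phi 1 >= a g(T) (T - 1),
   while phi T <= B g T <= B g 1. *)
Lemma derive_decay_bound T : 1 < T -> a * g T * (T - 1) <= B * g 1 - phi 1.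
Proof.
move=> T1.
have g_nincr x y : 0 < x -> x <= y -> g y <= g x.
  move=> x0 xy; rewrite -subr_le0.
  have [z /andP[xz _] ->] := MVT_gt0 x0 xy g_deriv.
  by rewrite mulr_le0_ge0 ?subr_ge0 // dg_le0 // (lt_le_trans x0 xz).
have [z /andP[z1 zT] phiTE] := MVT_gt0 ltr01 (ltW T1) phi_deriv.
have z0 : 0 < z by apply: lt_le_trans z1.
have : a * g T * (T - 1) <= phi T - phi 1.
  rewrite phiTE; apply: ler_wpM2r; first by rewrite subr_ge0 ltW.
  apply: le_trans _ (dphi_ge _ z0); apply: ler_wpM2l; first exact: ltW.
  exact: g_nincr.
move/le_trans; apply; apply: lerB => //; apply: le_trans (phi_le _ (ltW T1)) _.
by apply: ler_wpM2l => //; apply: g_nincr => //; apply: ltW.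
Qed.

Lemma derive_decay_cvg0 : (forall t : R, 0 < t -> 0 <= g t) -> g t @[t --> +oo] --> 0.
Proof.
move=> g_ge0; set A := B * g 1 - phi 1.
apply/cvgr0Pnorm_le => e e0.
have ae0 : 0 < a * e by rewrite mulr_gt0.
exists (1 + `|A| / (a * e)); split; first exact: num_real.
move=> T TA.
have Aae0 : 0 <= `|A| / (a * e) by rewrite divr_ge0 // ltW.
have T1 : 1 < T by apply: le_lt_trans TA; rewrite lerDl.
have aT0 : 0 < a * (T - 1) by rewrite mulr_gt0 // subr_gt0.
rewrite ger0_norm; last by apply: g_ge0; apply: lt_trans T1.
rewrite -(ler_pM2r aT0); apply: (le_trans (y := `|A|)).
  by rewrite mulrCA mulrA; apply: le_trans (derive_decay_bound _ T1) (ler_norm _).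
have -> : e * (a * (T - 1)) = (T - 1) * (a * e) by ring.
by rewrite -ler_pdivrMr //; lra.
Qed.

End Decay.

Lemma cvg_near_eq {R : realType} (u w : nat -> R) (a b : R) :
  u @ \oo --> a -> w @ \oo --> b -> (\forall k \near \oo, u k = w k) -> a = b.
Proof.
move=> ua wb uw; have ub : u @ \oo --> b.
  by apply: cvg_trans wb; apply: near_eq_cvg; apply: filterS uw => k /esym.
exact: cvg_unique ua ub.
Qed.

Section LimitPoint.
Context {R : realType} {n : nat}.
Local Notation C := R[i].
Local Notation M := 'M[C]_n.
Variables (r : nat -> M) (sigma : M).
Hypothesis r_sigma : forall Y : M,
  (fun k => complex.Re (\tr (r k *m Y))) @ \oo --> complex.Re (\tr (sigma *m Y)) /\
  (fun k => complex.Im (\tr (r k *m Y))) @ \oo --> complex.Im (\tr (sigma *m Y)).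

Lemma limit_mxtrace_eq (Y : M) (z : C) :
  (\forall k \near \oo, \tr (r k *m Y) = z) -> \tr (sigma *m Y) = z.
Proof.
move=> rYz; have [rRe rIm] := r_sigma Y.
by apply: complexP; [apply: cvg_near_eq rRe (cvg_cst _) _ | apply: cvg_near_eq rIm (cvg_cst _) _];
  apply: filterS rYz => k ->.
Qed.

Lemma limit_mxtrace_ge0 (Y : M) :
  (\forall k \near \oo, 0 <= \tr (r k *m Y)) -> 0 <= \tr (sigma *m Y).
Proof.
move=> rY0; have [rRe rIm] := r_sigma Y; rewrite lecE; apply/andP; split.
  apply/eqP; apply: cvg_near_eq rIm (cvg_cst _) _.
  by apply: filterS rY0 => k /ger0_Im.
by apply: ler_cvg_to (cvg_cst 0) rRe _; apply: filterS rY0 => k /Re_ge0.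
Qed.

Lemma limit_density : (\forall k \near \oo, density (r k)) -> density sigma.
Proof.
move=> r_dens; split; first split.
- apply/matrixP => i j; rewrite mxadjE -!mxtrace_mul_delta; apply: complexP.
  + rewrite Re_conj; apply: cvg_near_eq (r_sigma _).1 (r_sigma _).1 _.
    apply: filterS r_dens => k [[r_sa _] _].
    by rewrite !mxtrace_mul_delta -{1}r_sa mxadjE Re_conj.
  + rewrite Im_conj; apply: cvg_near_eq (cvgN (r_sigma _).2) (r_sigma _).2 _.
    apply: filterS r_dens => k [[r_sa _] _].
    by rewrite opprfctE /= !mxtrace_mul_delta -{1}r_sa mxadjE Im_conj opprK.
- move=> v; rewrite -/(qform sigma v) qform_mxtrace.
  apply: limit_mxtrace_ge0; apply: filterS r_dens => k [r_psd _].
  by rewrite -qform_mxtrace; apply: psd_nonneg_form.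
- rewrite -[sigma]mulmx1; apply: limit_mxtrace_eq.
  by apply: filterS r_dens => k [_ r_tr]; rewrite mulmx1.
Qed.

End LimitPoint.

Lemma lyapunov_trajectory_cvg0 {R : realType} {n : nat} {H L V : 'M[R[i]]_n}
    {c : R} {rho : R -> 'M[R[i]]_n} :
  lyapunov L V -> V *m H = H *m V -> 0 < c -> mxle (c%:C%C *: V) (dissip L V) ->
  trajectory H L rho -> complex.Re (\tr (V *m rho t)) @[t --> +oo] --> 0.
Proof.
move=> [sa [V_psd [_ genV_le0]]] VH c0 cV_le rho_traj.
have V_ge0 := psd_nonneg_form V_psd.
have [K K0 W_ge] := gen_sq_sub_ge sa V_ge0 genV_le0 c0 cV_le.
have [b /ltW b_ge0 Vb] := qform_sq_le sa V_ge0.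
have rho_psd t : 0 < t -> psd (rho t) by move=> t0; case: (rho_traj.1 t (ltW t0)).
set W := V *m V - K *: V.
apply: (derive_decay_cvg0 _ (fun t => complex.Re (\tr (V *m lindblad H L (rho t))))
  (fun t => complex.Re (\tr (W *m rho t)))
  (fun t => complex.Re (\tr (W *m lindblad H L (rho t)))) (c / 2) (complex.Re b)).
- by rewrite divr_gt0.
- exact: Re_ge0.
- by move=> t t0; apply: trajectory_is_derive.
- move=> t t0; rewrite mxtrace_lindblad //.
  apply: le_trans (Re_mxtrace_le (rho_psd _ t0) (mxle_nonneg_form genV_le0)) _.
  by rewrite mul0mx mxtrace0.
- by move=> t t0; apply: trajectory_is_derive.
- move=> t t0; rewrite mxtrace_lindblad ?comm_sq_subZ //.
  have c2_ge0 : 0 <= (c / 2)%:C%C :> R[i] by rewrite ler0c; apply/ltW/divr_gt0.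
  apply: le_trans (Re_mxtrace_le (rho_psd _ t0) W_ge).
  by rewrite -scalemxAl mxtraceZ ReM_ge0l.
- move=> t t1; have W_le : nonneg_form (b *: V - W).
    move=> v; rewrite /W opprB addrA addrAC qformD qformB !qformZ.
    by apply: addr_ge0; [rewrite subr_ge0 | apply: mulr_ge0 (ltW K0) _].
  apply: le_trans (Re_mxtrace_le (rho_psd _ (lt_le_trans ltr01 t1)) W_le) _.
  by rewrite -scalemxAl mxtraceZ ReM_ge0l.
- by move=> t t0; apply/Re_ge0/(psd_mxtrace_ge0 (rho_psd _ t0) V_ge0).
Qed.

Theorem lemma12 (R : realType) (n : nat) (H L V : 'M[R[i]]_n) (c : R) :
  selfadj H ->
  lyapunov L V ->
  V *m H = H *m V ->
  0 < c ->
  mxle (c%:C%C *: V) (dissip L V) ->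
  forall rho : R -> 'M[R[i]]_n,
    trajectory H L rho ->
    forall sigma : 'M[R[i]]_n, traj_limit_point rho sigma -> ZV V sigma.
Proof.
move=> _ V_lyap VH c0 cV_le rho rho_traj sigma [s [s_oo rho_s_sigma]].
pose r k := rho (s k).
have r_dens : \forall k \near \oo, density (r k).
  by apply: filterS ((cvgryPge s).1 s_oo 0) => k; apply: rho_traj.1.
have g_cvg0 := lyapunov_trajectory_cvg0 V_lyap VH c0 cV_le rho_traj.
split; first exact: (limit_density r _ rho_s_sigma).
have [ReV_cvg _] := rho_s_sigma V; rewrite mxtrace_mulC; apply: complexP.
  apply: cvg_near_eq ReV_cvg (cvg_comp _ _ s_oo g_cvg0) _.
  by apply: nearW => k; rewrite mxtrace_mulC.
rewrite ger0_Im //; apply: (limit_mxtrace_ge0 r _ rho_s_sigma).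
apply: filterS r_dens => k [r_psd _]; rewrite mxtrace_mulC.
exact: psd_mxtrace_ge0 r_psd (psd_nonneg_form V_lyap.2.1).
Qed.
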